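(* Let $0\le m<n$ and $\lambda\in\mathcal P_m$. For every highest weight vertex $b=x_1\otimes\cdots\otimes x_m$ of weight $\lambda$ of the $C_n$-crystal $(B_1^{C_n})^{\otimes m}$, $$\overline D(b)=\widetilde D(b)+\frac{m-|\lambda|}{2}.$$
   Context: $B_1^{C_n}$ has vertices $1,\dots,n,\overline n,\dots,\overline1$ with weights $\mathrm{wt}(i)=\varepsilon_i$, $\mathrm{wt}(\overline i)=-\varepsilon_i$ and arrows $i\xrightarrow{i}i+1$, $\overline{i+1}\xrightarrow{i}\overline i$ ($1\le i<n$), $n\xrightarrow{n}\overline n$. Tensor rule: $\tilde f_i(b\otimes b')=\tilde f_ib\otimes b'$ if $\varphi_i(b)>\varepsilon_i(b')$, else $b\otimes\tilde f_ib'$; $\tilde e_i(b\otimes b')=\tilde e_ib\otimes b'$ if $\varphi_i(b)\ge\varepsilon_i(b')$, else $b\otimes\tilde e_ib'$. Highest weight means $\varepsilon_i(b)=0$ for $1\le i\le n$; $\lambda\in\mathcal P_m$ (partition with at most $m$ parts) is identified with $\sum\lambda_i\varepsilon_i$ and $|\lambda|=\sum\lambda_i$. Two orders on the letters: $\le^C$: $1<2<\cdots<n<\overline n<\cdots<\overline2<\overline1$ (total); $\le^D$: $\overline n<\cdots<\overline2<\{1,\overline1\}<2<\cdots<n$, where $1$ and $\overline1$ are incomparable and each lies above $\overline2$ and below $2$. Define $\overline H(x\otimes y)=0$ if $x\ge^C y$, $=2$ if $(x,y)=(1,\overline1)$, and $=1$ otherwise; define $\widetilde H(x\otimes y)=0$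 if $x\ge^D y$, $=2$ if $(x,y)=(\overline n,n)$, and $=1$ otherwise (so e.g. $\widetilde H(1\otimes\overline1)=\widetilde H(\overline1\otimes1)=1$). Then $\overline D(b)=\sum_{i=1}^{m-1}(m-i)\overline H(x_i\otimes x_{i+1})$ and $\widetilde D(b)=\sum_{i=1}^{m-1}(m-i)\widetilde H(x_i\otimes x_{i+1})$. *)

From mathcomp Require Import all_boot all_order all_algebra.
Set Implicit Arguments. Unset Strict Implicit. Unset Printing Implicit Defensive.
Import GRing.Theory Num.Theory.

(* A vertex of B_1^{C_n}: (j, false) is the letter j+1, (j, true) is the
   barred letter \overline{j+1}, for j : 'I_n. *)
Definition letter (n : nat) := ('I_n * bool)%type.

Section Crystal.
Variable n : nat.
Implicit Types (x y : letter n) (c : nat).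

Definition lnum x : nat := (val x.1).+1.
Definition lbar x : bool := x.2.

(* e_c on a single letter, for 1 <= c <= n, following the arrows
   i -> i+1, \overline{i+1} -> \overline i (1 <= i < n), n -> \overline n. *)
Definition mkord (k : nat) : option 'I_n :=
  (if k < n as b return (k < n = b -> option 'I_n)
   then fun h => Some (Ordinal h) else fun _ => None) erefl.

Definition eL c x : option (letter n) :=
  if c == n then
    (if lbar x && (lnum x == n) then Some (x.1, false) else None)
  else if ~~ lbar x then
    (if lnum x == c.+1 then omap (fun j : 'I_n => (j, false)) (mkord (val x.1).-1)
     else None)
  else
    (if lnum x == c then omap (fun j : 'I_n => (j, true)) (mkord (val x.1).+1)
     else None).

Definition epsL c x : nat :=
  if c == n then (lbar x && (lnum x == n)) : nat
  else (if lbar x then lnum x == c else lnum x == c.+1) : nat.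

Definition phiL c x : nat :=
  if c == n then (~~ lbar x && (lnum x == n)) : nat
  else (if lbar x then lnum x == c.+1 else lnum x == c) : nat.

Fixpoint iter_count (g : seq (letter n) -> option (seq (letter n)))
    (k : nat) (w : seq (letter n)) : nat :=
  match k with
  | 0 => 0
  | k'.+1 => match g w with None => 0 | Some w2 => (iter_count g k' w2).+1 end
  end.

(* e_c on the tensor product x_1 ⊗ (x_2 ⊗ (... ⊗ x_m)), with the tensor rule
   e(b ⊗ b') = e b ⊗ b' if phi(b) >= eps(b'), else b ⊗ e b'.
   eps(b') is the number of times e_c can be applied to b' (at most size b'). *)
Fixpoint eword_fuel (fuel : nat) c (w : seq (letter n)) : option (seq (letter n)) :=
  match fuel, w with
  | 0, _ => None
  | _, [::] => None
  | f.+1, x :: w' =>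
      if iter_count (eword_fuel f c) (size w') w' <= phiL c x
      then omap (fun y => y :: w') (eL c x)
      else omap (cons x) (eword_fuel f c w')
  end.

Definition eword c (w : seq (letter n)) := eword_fuel (size w) c w.

Definition highest_weight (w : seq (letter n)) : Prop :=
  forall c, 1 <= c <= n -> eword c w = None.

Definition has_weight (w : seq (letter n)) (lam : seq nat) : Prop :=
  forall j : 'I_n,
    (Posz (count (pred1 (j, false)) w) - Posz (count (pred1 (j, true)) w))%R
    = Posz (nth 0 lam j).

(* the order <=^C : 1 < ... < n < \bar n < ... < \bar 1 *)
Definition rankC x : nat := if lbar x then (2 * n).-1 - val x.1 else val x.1.
Definition geC x y : bool := rankC y <= rankC x.

(* the partial order <=^D : \bar n < ... < \bar 2 < {1, \bar 1} < 2 < ... < n *)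
Definition valD x : int := if lbar x then (- Posz (val x.1))%R else Posz (val x.1).
Definition geD x y : bool := (x == y) || (valD y < valD x)%R.

Definition Hbar x y : nat :=
  if geC x y then 0
  else if (lnum x == 1) && ~~ lbar x && (lnum y == 1) && lbar y then 2 else 1.

Definition Htil x y : nat :=
  if geD x y then 0
  else if (lnum x == n) && lbar x && (lnum y == n) && ~~ lbar y then 2 else 1.

Definition Dgen (H : letter n -> letter n -> nat) (w : seq (letter n)) : nat :=
  match w with
  | [::] => 0
  | x0 :: _ =>
    let m := size w in
    \sum_(i < m.-1) (m - i.+1) * H (nth x0 w i) (nth x0 w i.+1)
  end.

Definition Dbar w := Dgen Hbar w.
Definition Dtil w := Dgen Htil w.

End Crystal.

Definition partition_atmost (m : nat) (lam : seq nat) : bool :=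
  sorted geq lam && all (fun p => 0 < p) lam && (size lam <= m).

(* A word is highest weight iff eps_c = 0 for all c, and by the signature rule
   this says: after each prefix P the next letter x satisfies
   eps_c(x) <= <wt P, alpha_c^vee>.  Inductively the weight of every prefix of
   length k has nonnegative coordinates supported on the first k ones, so a
   barred letter \bar i can only occur at a position p > i.  Hence the first
   letter is unbarred and \bar n never occurs before the last position; on such
   adjacent pairs Hbar(x, y) + [x barred] = Htil(x, y) + [y barred], and
   summation by parts gives Dbar = Dtil + #barred letters.  Finally
   |lambda| = #unbarred - #barred and m = #unbarred + #barred. *)

From mathcomp Require Import all_boot all_order all_algebra zify ring.
Import GRing.Theory Num.Theory.

Set Implicit Arguments.
Unset Strict Implicit.
Unset Printing Implicit Defensive.

Section SignatureRule.
Variable n : nat.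
Implicit Types (x y : letter n) (w : seq (letter n)).

Lemma mkord_val k : omap val (mkord n k) = if k < n then Some k else None.
Proof.
rewrite /mkord; move: (@erefl bool (k < n)).
by case: {2 3}(k < n) => e; rewrite e.
Qed.

Lemma eLP c x : 1 <= c <= n ->
  if eL c x is Some y then [/\ epsL c x = 1, epsL c y = 0 & phiL c y = (phiL c x).+1]
  else epsL c x = 0.
Proof.
case: x => [[j lt_jn] b] /andP[c_gt0 c_le_n].
have := mkord_val j.-1; have := mkord_val j.+1.
rewrite /eL /epsL /phiL /lnum /lbar /=.
case: (mkord n j.-1) => [o1|]; case: (mkord n j.+1) => [o2|] /=.
all: case: b; repeat case: ifP => /=; move=> *; try congruence.
all: repeat match goal with H : Some _ = Some _ |- _ => case: H => H end.
all: rewrite /= ?H; first [split; lia | lia].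
Qed.

Lemma epsL_le1 c x : epsL c x <= 1.
Proof. by rewrite /epsL; case: ifP => _; [|case: ifP => _]; apply: leq_b1. Qed.

(* The signature rule eps(x ⊗ w') = eps(x) + max(0, eps(w') - phi(x)) of the
   tensor rule; truncated subtraction provides the max. *)
Fixpoint epsW c w : nat :=
  if w is x :: w' then epsL c x + (epsW c w' - phiL c x) else 0.

Lemma epsW_le_size c w : epsW c w <= size w.
Proof. by elim: w => //= x w IHw; have := epsL_le1 c x; lia. Qed.

Definition eword_fuel_spec c s w :=
  (eword_fuel s c w = None <-> epsW c w = 0) /\
  (forall w2, eword_fuel s c w = Some w2 ->
     size w2 = size w /\ epsW c w2 = (epsW c w).-1).

Lemma iter_count_epsW c s k w :
    (forall w, size w = s -> eword_fuel_spec c s w) -> size w = s ->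
  iter_count (eword_fuel s c) k w = minn k (epsW c w).
Proof.
move=> spec_s; elim: k w => [|k IHk] w sw /=; first by rewrite min0n.
have [eNone eSome] := spec_s w sw.
case E: (eword_fuel s c w) => [w2|]; last by rewrite (proj1 eNone E) minn0.
have [s2 e2] := eSome _ E; rewrite IHk ?s2 // e2.
have : epsW c w <> 0 by move/eNone; rewrite E.
lia.
Qed.

Lemma eword_fuelP c s w : 1 <= c <= n -> size w = s -> eword_fuel_spec c s w.
Proof.
move=> c_range; elim: s w => [|s IHs] [|x w] //=; try by split=> //=.
case=> sw; rewrite /eword_fuel_spec /= (iter_count_epsW _ IHs sw).
rewrite (minn_idPr (epsW_le_size c w)).
have [eNone eSome] := IHs w sw.
case: leqP => le_eps_phi.
  have := eLP x c_range; case: (eL c x) => [y [epsx epsy phiy]|epsx0] /=.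
    by split=> [|_ [<-] /=]; rewrite ?epsx ?epsy ?phiy; split=> //; lia.
  by split=> //; split=> // _; rewrite epsx0; lia.
case E: (eword_fuel s c w) => [w2|] /=; last by have := proj1 eNone E; lia.
have [s2 e2] := eSome _ E.
by split=> [|_ [<-] /=]; [split=> //; lia | rewrite e2; split=> //; lia].
Qed.

Lemma highest_weight_epsW w c : highest_weight w -> 1 <= c <= n -> epsW c w = 0.
Proof. by move=> hw c_range; apply/(proj1 (eword_fuelP c_range (erefl (size w))))/hw. Qed.

End SignatureRule.

Section PrefixWeight.
Local Open Scope ring_scope.
Variable n : nat.
Implicit Types (x : letter n) (P S : seq (letter n)).

Definition wt P (j : nat) : int :=
  (count [pred x | (val x.1 == j) && ~~ x.2] P)%:Z
  - (count [pred x | (val x.1 == j) && x.2] P)%:Z.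

(* The pairing of wt P with the simple coroot alpha_c^vee of C_n, i.e.
   eps_c - eps_(c+1) for c < n and eps_n for c = n; coordinates are 0-indexed. *)
Definition wt_coroot (c : nat) P : int :=
  if c == n then wt P n.-1 else wt P c.-1 - wt P c.

Definition wt_supported P := forall j, 0 <= wt P j /\ (0 < wt P j -> (j < size P)%N).

Lemma wt_rcons P x j : wt (rcons P x) j =
  wt P j + ((val x.1 == j) && ~~ x.2)%N%:Z - ((val x.1 == j) && x.2)%N%:Z.
Proof. by rewrite /wt -!cats1 !count_cat /= !addn0 !PoszD; lia. Qed.

Lemma wt_coroot_rcons c P x : (1 <= c <= n)%N ->
  wt_coroot c (rcons P x) = wt_coroot c P + (phiL c x)%:Z - (epsL c x)%:Z.
Proof.
case: x => [[j lt_jn] b] c_range.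
rewrite /wt_coroot !wt_rcons /phiL /epsL /lnum /lbar /=.
by case: b => /=; repeat case: eqP => /=; lia.
Qed.

Section AdmissibleLetter.
Variables (P : seq (letter n)) (x : letter n).
Hypothesis suppP : wt_supported P.
Hypothesis x_adm : forall c, (1 <= c <= n)%N -> (epsL c x)%:Z <= wt_coroot c P.

Lemma wt_gt0_barred : x.2 -> 0 < wt P (val x.1).
Proof.
case: x x_adm => [[j lt_jn] []] //= adm _.
have := adm j.+1 lt_jn; rewrite /wt_coroot /epsL /lnum /lbar /= eqxx.
have [wj_ge0 _] := suppP j; have [wj1_ge0 _] := suppP j.+1.
by case: eqP => [<-|_] /=; lia.
Qed.

Lemma wt_gt0_unbarred : ~~ x.2 -> (0 < val x.1)%N -> 0 < wt P (val x.1).-1.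
Proof.
case: x x_adm => [[[|j] lt_jn] b] //= adm b_false _; rewrite (negbTE b_false) in adm.
have := adm j.+1 (ltnW lt_jn); rewrite /wt_coroot /epsL /lnum /lbar /= eqxx.
have [wj1_ge0 _] := suppP j.+1.
by case: eqP => /=; lia.
Qed.

Lemma barred_index_lt_size : x.2 -> (val x.1 < size P)%N.
Proof. by move=> b; apply: (proj2 (suppP _)); apply: wt_gt0_barred. Qed.

Lemma wt_supported_rcons : wt_supported (rcons P x).
Proof.
move=> i; rewrite wt_rcons size_rcons.
case: x wt_gt0_barred wt_gt0_unbarred => [[j lt_jn] b] /= barred unbarred.
have [wi_ge0 wi_supp] := suppP i.
case: eqP => [ji|_] /=; last lia.
subst i; case: b barred unbarred => /= [barred _ | _ unbarred].
  by have := barred isT; lia.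
split=> [|_]; first lia.
case: j {lt_jn wi_ge0 wi_supp} unbarred => // j unbarred.
by have [_ /(_ (unbarred isT isT))] := suppP j.
Qed.

End AdmissibleLetter.

(* The letter \bar i only occurs at positions p > i, counting from 1. *)
Definition barred_lt_pos (w : seq (letter n)) :=
  forall x0 k, (k < size w)%N -> (nth x0 w k).2 -> (val (nth x0 w k).1 < k)%N.

(* eps_c(P ⊗ S) = 0 amounts to eps_c(P) = 0 and eps_c(S) <= phi_c(P), and
   for such P, phi_c(P) = <wt P, alpha_c^vee>. *)
Lemma barred_lt_pos_suffix x0 P S : wt_supported P ->
    (forall c, (1 <= c <= n)%N -> (epsW c S)%:Z <= wt_coroot c P) ->
  forall k, (k < size S)%N -> (nth x0 S k).2 -> (val (nth x0 S k).1 < size P + k)%N.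
Proof.
elim: S P => [|x S IHS] P //= suppP epsS k.
have x_adm c (c_range : (1 <= c <= n)%N) : (epsL c x)%:Z <= wt_coroot c P.
  by have := epsS c c_range; lia.
case: k => [|k] /= lt_k.
  by rewrite addn0; apply: barred_index_lt_size.
rewrite -addSnnS -(size_rcons P x); apply: IHS => // [|c c_range].
  exact: wt_supported_rcons.
by rewrite wt_coroot_rcons //; have := epsS c c_range; lia.
Qed.

Lemma highest_weight_barred_lt_pos w : highest_weight w -> barred_lt_pos w.
Proof.
move=> hw x0 k; apply: (@barred_lt_pos_suffix x0 [::]) => [j|c c_range].
  by rewrite /wt /=; lia.
by rewrite (highest_weight_epsW hw c_range) /wt_coroot /wt /=; case: ifP.
Qed.

End PrefixWeight.

Lemma sum_weighted_shift (f : nat -> nat) L :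
  \sum_(0 <= i < L) (L - i) * f i.+1 + L * f 0 =
  \sum_(0 <= i < L) (L - i) * f i + \sum_(0 <= i < L) f i.+1.
Proof.
elim: L f => [|L IHL] f; first by rewrite !big_geq.
rewrite !big_nat_recl // !subn0.
under [\sum_(0 <= i < L) _ * f i.+2]eq_bigr => i _ do rewrite subSS.
under [\sum_(0 <= i < L) _ * f i.+1]eq_bigr => i _ do rewrite subSS.
have := IHL (fun i => f i.+1) => /=; lia.
Qed.

Lemma Dgen_coboundary n (H1 H2 : letter n -> letter n -> nat) (g : letter n -> nat) x0 w :
    (forall i, i < size w ->
       H1 (nth x0 (x0 :: w) i) (nth x0 w i) + g (nth x0 (x0 :: w) i)
       = H2 (nth x0 (x0 :: w) i) (nth x0 w i) + g (nth x0 w i)) ->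
  Dgen H1 (x0 :: w) + size w * g x0 = Dgen H2 (x0 :: w) + \sum_(x <- w) g x.
Proof.
move=> cobound; rewrite /Dgen /= (big_nth x0) big_mkord.
under eq_bigr => i _ do rewrite subSS.
under [in RHS]eq_bigr => i _ do rewrite subSS.
pose f i := g (nth x0 (x0 :: w) i).
have := sum_weighted_shift f (size w); rewrite !big_mkord /f /=.
have : \sum_(i < size w) (size w - i) * H1 (nth x0 (x0 :: w) i) (nth x0 w i)
       + \sum_(i < size w) (size w - i) * f i
     = \sum_(i < size w) (size w - i) * H2 (nth x0 (x0 :: w) i) (nth x0 w i)
       + \sum_(i < size w) (size w - i) * f i.+1.
  by rewrite -!big_split; apply: eq_bigr => i _ /=; rewrite -!mulnDr /f /= cobound.
rewrite /f /=; lia.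
Qed.

Lemma Hbar_Htil n (x y : letter n) : ~~ (x.2 && (val x.1 == n.-1)) ->
  Hbar x y + x.2 = Htil x y + y.2.
Proof.
case: x y => [[i lt_in] a] [[j lt_jn] b] /=.
rewrite /Hbar /Htil /geC /geD /rankC /valD /lnum /lbar /= xpair_eqE.
have -> : (Ordinal lt_in == Ordinal lt_jn) = (i == j) by [].
by case: a; case: b => /= not_bar_n; rewrite ?ltrN2 ?ltz_nat;
  repeat case: ifP => /=; lia.
Qed.

Lemma Dbar_Dtil n (w : seq (letter n)) :
  barred_lt_pos w -> size w <= n -> Dbar w = Dtil w + count snd w.
Proof.
case: w => [|x0 w] // bars size_le.
have x0_unbarred : x0.2 = false by apply/negbTE/negP => /(bars x0 0 isT).
have -> : count snd (x0 :: w) = \sum_(x <- w) (x.2 : nat).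
  by rewrite /= x0_unbarred -sum1_count big_mkcond.
have := @Dgen_coboundary n (@Hbar n) (@Htil n) (fun x => x.2 : nat) x0 w.
rewrite x0_unbarred muln0 addn0; apply.
move=> i lt_i; apply: Hbar_Htil; apply/negP => /andP[barred /eqP val_eq].
have := bars x0 i (ltnW lt_i) barred; move: size_le; rewrite val_eq /=; lia.
Qed.

Lemma sum_count_pair (T : finType) (U : eqType) (u : U) (s : seq (T * U)) :
  \sum_(t : T) count (pred1 (t, u)) s = count (fun x => x.2 == u) s.
Proof.
elim: s => [|[a v] s IHs] /=; first by rewrite big1.
rewrite big_split /= IHs (bigD1 a) //= xpair_eqE eqxx big1 ?addn0 // => t ne_ta.
by rewrite xpair_eqE eq_sym (negbTE ne_ta).
Qed.

Lemma sum_nth_ord (s : seq nat) k : size s <= k -> \sum_(j < k) nth 0 s j = sumn s.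
Proof.
move=> le_sk; rewrite sumnE (big_nth 0) big_mkord (big_ord_widen _ _ le_sk) [RHS]big_mkcond.
by apply: eq_bigr => j _; case: ltnP => // /(nth_default 0) ->.
Qed.

Lemma size_has_weight n (w : seq (letter n)) lam :
  has_weight w lam -> size lam <= n -> size w = sumn lam + (count snd w).*2.
Proof.
move=> wt_w le_lam_n.
have per_letter (j : 'I_n) :
    count (pred1 (j, false)) w = nth 0 lam j + count (pred1 (j, true)) w.
  by have := wt_w j; lia.
rewrite -(count_predC snd) -(sum_nth_ord le_lam_n).
have -> : count (predC snd) w = \sum_(j : 'I_n) count (pred1 (j, false)) w.
  by rewrite sum_count_pair; apply: eq_count => -[].
rewrite (eq_bigr _ (fun j _ => per_letter j)) big_split /= sum_count_pair.
have -> : count (fun x : letter n => x.2 == true) w = count snd w by apply: eq_count => -[? []].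
lia.
Qed.

Theorem proposition39 (n m : nat) (lam : seq nat) (b : seq (letter n)) :
  m < n -> partition_atmost m lam -> size b = m ->
  highest_weight b -> has_weight b lam ->
  ((Dbar b)%:R : rat) = ((Dtil b)%:R + (m%:R - (sumn lam)%:R) / 2)%R.
Proof.
move=> lt_mn /andP[_ le_lam_m] size_b hw wt_b.
have le_m_n := ltnW lt_mn.
rewrite (Dbar_Dtil (highest_weight_barred_lt_pos hw)) ?size_b //.
rewrite -size_b (size_has_weight wt_b (leq_trans le_lam_m le_m_n)).
by rewrite -addnn !natrD; field.
Qed.
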